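(* Let $b_1,\dots,b_n$ be nonnegative integers, let $i$ be an index with $b_i\ge1$, and put $[\mathbf b-\varepsilon_i]=[b_1,\dots,b_{i-1},b_i-1,b_{i+1},\dots,b_n]$ and $d=b_1+\dots+b_n+1$. Write the Hilbert–Poincaré series of $R_{[\mathbf b-\varepsilon_i]}$ as $$P_{R_{[\mathbf b-\varepsilon_i]}}(t)=\frac{h_0([\mathbf b-\varepsilon_i])+h_1([\mathbf b-\varepsilon_i])t+\dots+h_r([\mathbf b-\varepsilon_i])t^r}{(1-t)^{d-1}}$$ with $h_r([\mathbf b-\varepsilon_i])\ne0$. Then $$P_{R_{[\mathbf b]}}(t)=\frac{h_0([\mathbf b])+h_1([\mathbf b])t+\dots+h_r([\mathbf b])t^r+h_{r+1}([\mathbf b])t^{r+1}}{(1-t)^{d}},$$ where $h_0([\mathbf b])=1$, for $k=1,\dots,r$ $$h_k([\mathbf b])=\frac{(d-1-b_i-(k-1))\,h_{k-1}([\mathbf b-\varepsilon_i])+(b_i+k)\,h_k([\mathbf b-\varepsilon_i])}{b_i},$$ and $h_{r+1}([\mathbf b])=\frac{(d-1-b_i-r)\,h_r([\mathbf b-\varepsilon_i])}{b_i}$ (which may be zero). If $h_{r+1}([\mathbf b])=0$, then $h_r([\mathbf b])=\frac{h_{r-1}([\mathbf b-\varepsilon_i])+(b_i+r)h_r([\mathbf b-\varepsilon_i])}{b_i}>0$.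
   Context: Let $K$ be a field and $b_1,\dots,b_n$ nonnegative integers; write $[\mathbf b]=[b_1,\dots,b_n]$. Let $\mathcal M=\{0,\dots,b_1\}\times\dots\times\{0,\dots,b_n\}\subset\mathbb N^n$, $S=K[T_v\mid v\in\mathcal M]$ with all $T_v$ of degree 1, and let $\mathcal J_{[\mathbf b]}$ be the kernel of the ring homomorphism $S\to K[x_{j,l}\mid 1\le j\le n,\,0\le l\le b_j]$, $T_v\mapsto x_{1,v_1}x_{2,v_2}\cdots x_{n,v_n}$ (the ideal of the Segre embedding of $\mathbb P^{b_1}\times\dots\times\mathbb P^{b_n}$). Set $R_{[\mathbf b]}=S/\mathcal J_{[\mathbf b]}$. Its Hilbert function is $H_{R_{[\mathbf b]}}(l)=\prod_{j=1}^n\binom{b_j+l}{b_j}$, its Krull dimension is $b_1+\dots+b_n+1$, and its Hilbert–Poincaré series is $P_{R_{[\mathbf b]}}(t)=\sum_{l\ge0}H_{R_{[\mathbf b]}}(l)t^l$. *)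

From HB Require Import structures.
From mathcomp Require Import all_boot all_order all_algebra.
Set Implicit Arguments. Unset Strict Implicit. Unset Printing Implicit Defensive.
Import Order.TTheory GRing.Theory Num.Theory.
Local Open Scope ring_scope.

Definition segreHilb (n : nat) (b : 'I_n -> nat) (l : nat) : nat :=
  (\prod_(j < n) 'C(b j + l, b j))%N.

Definition segreDim (n : nat) (b : 'I_n -> nat) : nat := (\sum_(j < n) b j).+1.

Definition decr_at (n : nat) (b : 'I_n -> nat) (i : 'I_n) : 'I_n -> nat :=
  fun j => if j == i then (b j).-1 else b j.

(* Coefficient of t^m in 1/(1-t)^e. *)
Definition invPowCoef (e m : nat) : rat :=
  match e with
  | 0 => (m == 0%N)%:R
  | e'.+1 => ('C(m + e', e'))%:R
  end.

(* Coefficient of t^l in the power series h(t)/(1-t)^e. *)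
Definition ratSeriesCoef (h : {poly rat}) (e l : nat) : rat :=
  \sum_(k < (l.+1)) h`_k * invPowCoef e (l - k).

(* "P(t) = h(t)/(1-t)^e" as an identity of formal power series, where
   P(t) = sum_l H(l) t^l, compared coefficientwise. *)
Definition HPseries_is (H : nat -> nat) (h : {poly rat}) (e : nat) : Prop :=
  forall l : nat, (H l)%:R = ratSeriesCoef h e l.

Definition prevCoef (h : {poly rat}) (k : nat) : rat :=
  if k is k'.+1 then h`_k' else 0.

Definition newCoef (n : nat) (b : 'I_n -> nat) (i : 'I_n) (h' : {poly rat})
    (k : nat) : rat :=
  let d := segreDim b in
  let r := (size h').-1 in
  if k == 0%N then 1
  else if (k <= r)%N then
    (((d.-1 - b i)%N)%:R - (k.-1)%:R) * h'`_(k.-1) / (b i)%:R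
    + ((b i + k)%N)%:R * h'`_k / (b i)%:R
  else (* k = r + 1 *)
    (((d.-1 - b i)%N)%:R - r%:R) * h'`_r / (b i)%:R.

Definition newNumerator (n : nat) (b : 'I_n -> nat) (i : 'I_n) (h' : {poly rat})
  : {poly rat} := \poly_(k < ((size h').-1).+2) newCoef b i h' k.

From HB Require Import structures.
From mathcomp Require Import all_boot all_order all_algebra ring zify.
Import Order.TTheory GRing.Theory Num.Theory.
Set Implicit Arguments. Unset Strict Implicit. Unset Printing Implicit Defensive.
Local Open Scope ring_scope.

(* The Hilbert functions satisfy b_i H_[b](l) = (b_i + l) H_[b-e_i](l), and on
   power series the multiplier l is the operator t d/dt.  Applied to
   h'(t)/(1-t)^(d-1) it produces a numerator over (1-t)^d whose coefficients
   are exactly b_i times the stated h_k([b]); coefficientwise this reduces to a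
   weighted Pascal identity for binomial coefficients.

   For the positivity claim we use reciprocity: if g(t)/(1-t)^(e+1) has
   coefficients given by a polynomial Q at every l >= deg g, then for
   deg g <= s <= e one has Q(s - e - 1) = (-1)^e g_s.  The Hilbert polynomial of
   R_[c] is prod_j binom(x + c_j, c_j), whose values at negative integers are
   signed products of binomial coefficients.  When h_(r+1)([b]) = 0 we get
   r = d - 1 - b_i; reciprocity for h' forces b_j <= b_i for all j, and
   reciprocity for h gives h_r([b]) = prod_j binom(b_i, b_j) > 0. *)

Section GeneralizedBinomial.
Variable R : numFieldType.

(* binR e y = binom(y + e, e) = prod_(u < e) (y + u + 1)/(u + 1), for any y. *)
Definition binR (e : nat) (y : R) : R := \prod_(u < e) ((y + u.+1%:R) / u.+1%:R).

Lemma binR_nat (e m : nat) : binR e m%:R = 'C(m + e, e)%:R.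
Proof.
elim: e => [|e IH]; first by rewrite /binR big_ord0 bin0.
rewrite /binR big_ord_recr /= -/(binR e _) IH.
apply: (mulIf (x := e.+1%:R)); first by rewrite pnatr_eq0.
rewrite -mulrA mulfVK ?pnatr_eq0 // -natrD -!natrM addnS mulnC.
by rewrite (mul_bin_diag (m + e).+1 e) mulnC.
Qed.

Lemma prod_bin_ffact (m e : nat) :
  \prod_(u < e) ((m - u)%:R / u.+1%:R : R) = 'C(m, e)%:R.
Proof.
elim: e => [|e IH]; first by rewrite big_ord0 bin0.
rewrite big_ord_recr /= IH.
apply: (mulIf (x := e.+1%:R)); first by rewrite pnatr_eq0.
by rewrite -mulrA mulfVK ?pnatr_eq0 // -!natrM mulnC -mul_bin_left mulnC.
Qed.

Lemma binR_neg (e m : nat) : binR e (- m.+1%:R) = (-1) ^+ e * 'C(m, e)%:R.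
Proof.
have [lt_me | le_em] := ltnP m e.
  rewrite bin_small // mulr0; apply/eqP/prodf_eq0; exists (Ordinal lt_me) => //=.
  by rewrite addNr mul0r.
rewrite -prod_bin_ffact -[e in (-1) ^+ e]card_ord -prodrN.
apply: eq_bigr => u _; rewrite -mulNr natrB; last exact: leq_trans (ltnW (ltn_ord u)) le_em.
by congr (_ / _); rewrite -!natr1; ring.
Qed.

Definition binPoly (e : nat) (c : R) : {poly R} :=
  \prod_(u < e) (('X + (c + u.+1%:R)%:P) * (u.+1%:R)^-1%:P).

Lemma binPoly_eval (e : nat) (c x : R) : (binPoly e c).[x] = binR e (x + c).
Proof.
by rewrite /binPoly horner_prod; apply: eq_bigr => u _; rewrite !hornerE.
Qed.

End GeneralizedBinomial.

Lemma sum_ord_widen (V : nmodType) (n1 n2 : nat) (F : nat -> V) :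
  (n1 <= n2)%N -> (forall k, (n1 <= k < n2)%N -> F k = 0) ->
  \sum_(k < n1) F k = \sum_(k < n2) F k.
Proof.
move=> le_n12 F0; rewrite (big_ord_widen _ _ le_n12) big_mkcond /=.
by apply: eq_bigr => k _; case: ltnP => // le_n1k; rewrite F0 // le_n1k ltn_ord.
Qed.

Lemma poly_eq_on_nat_tail (R : numDomainType) (p q : {poly R}) (s : nat) :
  (forall l, (s <= l)%N -> p.[l%:R] = q.[l%:R]) -> p = q.
Proof.
move=> Epq; apply/eqP; rewrite -subr_eq0; apply/negPn/negP => nz_pq.
pose rs : seq R := [seq (s + j)%:R | j <- iota 0 (size (p - q))].
have roots_rs : all (root (p - q)) rs.
  by apply/allP => _ /mapP[j _ ->]; rewrite rootE !hornerE Epq ?leq_addr ?subrr.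
have uniq_rs : uniq rs.
  by rewrite map_inj_uniq ?iota_uniq // => j1 j2 /eqP; rewrite eqr_nat eqn_add2l => /eqP.
by have := max_poly_roots nz_pq roots_rs uniq_rs; rewrite size_map size_iota ltnn.
Qed.

(* The Hilbert polynomial of g(t)/(1-t)^(e+1): it computes the coefficient
   of t^l as soon as l >= deg g. *)
Definition seriesPoly (g : {poly rat}) (e : nat) : {poly rat} :=
  \sum_(k < size g) g`_k *: binPoly e (- k%:R).

Lemma seriesPoly_eval (g : {poly rat}) (e : nat) (x : rat) :
  (seriesPoly g e).[x] = \sum_(k < size g) g`_k * binR e (x - k%:R).
Proof.
by rewrite /seriesPoly horner_sum; apply: eq_bigr => k _; rewrite hornerZ binPoly_eval.
Qed.

Lemma seriesPoly_nat (g : {poly rat}) (e l : nat) :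
  (size g <= l.+1)%N -> (seriesPoly g e).[l%:R] = ratSeriesCoef g e.+1 l.
Proof.
move=> le_gl; rewrite seriesPoly_eval /ratSeriesCoef.
rewrite (sum_ord_widen (F := fun k => g`_k * binR e (l%:R - k%:R)) le_gl).
  by apply: eq_bigr => k _; rewrite -natrB ?binR_nat // -ltnS.
by move=> k /andP[le_gk _]; rewrite nth_default ?mul0r.
Qed.

(* At s - e - 1 only the k = s summand of seriesPoly survives. *)
Lemma seriesPoly_neg (g : {poly rat}) (e s : nat) :
  (size g <= s.+1)%N -> (s <= e)%N ->
  (seriesPoly g e).[s%:R - e.+1%:R] = (-1) ^+ e * g`_s.
Proof.
move=> le_gs le_se; rewrite seriesPoly_eval.
rewrite (sum_ord_widen (F := fun k => g`_k * binR e (s%:R - e.+1%:R - k%:R)) le_gs);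
  last by move=> k /andP[le_gk _]; rewrite nth_default ?mul0r.
rewrite big_ord_recr /= big1 ?add0r => [|k _].
  have -> : s%:R - e.+1%:R - s%:R = - e.+1%:R :> rat by ring.
  by rewrite binR_neg binn mulr1 mulrC.
have lt_ks : (k < s)%N := ltn_ord k.
have -> : s%:R - e.+1%:R - k%:R = - (e - s + k).+1%:R :> rat.
  by rewrite -!natr1 natrD natrB //; ring.
by rewrite binR_neg bin_small ?mulr0 //; lia.
Qed.

Lemma series_reciprocity (g Q : {poly rat}) (e s : nat) :
  (size g <= s.+1)%N -> (s <= e)%N ->
  (forall l, Q.[l%:R] = ratSeriesCoef g e.+1 l) ->
  Q.[s%:R - e.+1%:R] = (-1) ^+ e * g`_s.
Proof.
move=> le_gs le_se EQ.
have -> : Q = seriesPoly g e.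
  by apply: (poly_eq_on_nat_tail (s := size g)) => l le_gl; rewrite EQ seriesPoly_nat ?leqW.
exact: seriesPoly_neg.
Qed.

Definition segrePoly (n : nat) (c : 'I_n -> nat) : {poly rat} :=
  \prod_(j < n) binPoly (c j) 0.

Lemma segrePoly_eval (n : nat) (c : 'I_n -> nat) (x : rat) :
  (segrePoly c).[x] = \prod_(j < n) binR (c j) x.
Proof.
by rewrite /segrePoly horner_prod; apply: eq_bigr => j _; rewrite binPoly_eval addr0.
Qed.

Lemma segrePoly_nat (n : nat) (c : 'I_n -> nat) (l : nat) :
  (segrePoly c).[l%:R] = (segreHilb c l)%:R.
Proof.
by rewrite segrePoly_eval /segreHilb natr_prod; apply: eq_bigr => j _; rewrite binR_nat addnC.
Qed.

Lemma segrePoly_neg (n : nat) (c : 'I_n -> nat) (m : nat) :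
  (segrePoly c).[- m.+1%:R]
  = (-1) ^+ (\sum_(j < n) c j)%N * (\prod_(j < n) 'C(m, c j))%N%:R.
Proof.
rewrite segrePoly_eval natr_prod -prodrXr -big_split /=.
by apply: eq_bigr => j _; rewrite binR_neg.
Qed.

Lemma segre_numerator_top (n : nat) (c : 'I_n -> nat) (g : {poly rat}) (s : nat) :
  HPseries_is (segreHilb c) g (segreDim c) ->
  (size g <= s.+1)%N -> (s <= \sum_(j < n) c j)%N ->
  g`_s = (\prod_(j < n) 'C(\sum_(j < n) c j - s, c j))%N%:R.
Proof.
move=> Hser le_gs le_se; apply: (can_inj (signrMK (\sum_(j < n) c j)%N)).
rewrite -segrePoly_neg -(series_reciprocity (Q := segrePoly c) le_gs le_se).
  by congr (_.[_]); rewrite -!natr1 natrB //; ring.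
by move=> l; rewrite segrePoly_nat Hser.
Qed.

Lemma ratSeriesCoef0 (g : {poly rat}) (e : nat) : ratSeriesCoef g e 0 = g`_0.
Proof. by rewrite /ratSeriesCoef big_ord1; case: e => [|e] /=; rewrite ?binn mulr1. Qed.

Lemma HPseries_coef0 (n : nat) (c : 'I_n -> nat) (g : {poly rat}) (e : nat) :
  HPseries_is (segreHilb c) g e -> g`_0 = 1.
Proof.
move=> /(_ 0%N); rewrite ratSeriesCoef0 /segreHilb big1 // => j _.
by rewrite addn0 binn.
Qed.

Lemma segreDim_decr (n : nat) (b : 'I_n -> nat) (i : 'I_n) :
  (0 < b i)%N -> segreDim b = (segreDim (decr_at b i)).+1.
Proof.
move=> bi_gt0; rewrite /segreDim (bigD1 i) //= [in RHS](bigD1 i) //= /decr_at eqxx.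
rewrite -[b i in LHS](prednK bi_gt0) addSn; congr (_ + _).+2.
by apply: eq_bigr => j ne_ji; rewrite (negbTE ne_ji).
Qed.

(* The recursion b_i H_[b](l) = (b_i + l) H_[b-e_i](l), from
   b_i binom(b_i + l, b_i) = (b_i + l) binom(b_i - 1 + l, b_i - 1). *)
Lemma segreHilb_decr (n : nat) (b : 'I_n -> nat) (i : 'I_n) (l : nat) :
  (0 < b i)%N -> (segreHilb b l * b i = segreHilb (decr_at b i) l * (b i + l))%N.
Proof.
move=> bi_gt0; rewrite /segreHilb (bigD1 i) //= [in RHS](bigD1 i) //=.
have -> : (\prod_(j < n | j != i) 'C(decr_at b i j + l, decr_at b i j)
         = \prod_(j < n | j != i) 'C(b j + l, b j))%N.
  by apply: eq_bigr => j ne_ji; rewrite /decr_at (negbTE ne_ji).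
rewrite /decr_at eqxx -[b i]prednK //= mulnAC [RHS]mulnAC; congr (_ * _)%N.
by move: (b i).-1 => c; rewrite mulnC -mul_bin_diag mulnC addSn.
Qed.

Lemma ratSeriesCoefZ (a : rat) (g : {poly rat}) (e l : nat) :
  ratSeriesCoef (a *: g) e l = a * ratSeriesCoef g e l.
Proof. by rewrite /ratSeriesCoef mulr_sumr; apply: eq_bigr => k _; rewrite coefZ mulrA. Qed.

(* Weighted Pascal rule: the coefficientwise form of multiplying the series
   g/(1-t)^(e+1) by (y + t d/dt). *)
Lemma bin_weighted_pascal (m e : nat) (y : rat) :
  (e.+1%:R - y) * 'C(m + e, e.+1)%:R + y * 'C(m + e.+1, e.+1)%:R
  = (y + m%:R) * 'C(m + e, e)%:R.
Proof.
have absorb : (e.+1 * 'C(m + e, e.+1) = m * 'C(m + e, e))%N.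
  by rewrite mul_bin_left addnK.
have /(congr1 (fun x => x%:R : rat)) := absorb; rewrite !natrM => absorbR.
rewrite addnS binS natrD.
transitivity (e.+1%:R * 'C(m + e, e.+1)%:R + y * 'C(m + e, e)%:R); first ring.
by rewrite absorbR; ring.
Qed.

Lemma ratSeriesCoef_shift (g G : {poly rat}) (a c : rat) (e : nat) :
  a + c = e.+1%:R ->
  (forall k, G`_k = (a + 1 - k%:R) * prevCoef g k + (c + k%:R) * g`_k) ->
  forall l, ratSeriesCoef G e.+2 l = (c + l%:R) * ratSeriesCoef g e.+1 l.
Proof.
move=> ac_e coefG l; rewrite /ratSeriesCoef mulr_sumr.
under eq_bigr do rewrite coefG mulrDl.
rewrite big_split /= big_ord_recl /= mulr0 mul0r add0r.
have shifted : \sum_(k < l)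
    (a + 1 - (bump 0 k)%:R) * g`_(0 + k) * 'C(l - bump 0 k + e.+1, e.+1)%:R
  = \sum_(k < l.+1) (a - k%:R) * g`_k * 'C(l - k + e, e.+1)%:R.
  rewrite -(sum_ord_widen (F := fun k => (a - k%:R) * g`_k * 'C(l - k + e, e.+1)%:R)
    (leqnSn l)) => [|k /andP[le_lk lt_kl]]; last first.
    by rewrite bin_small ?mulr0 //; lia.
  apply: eq_bigr => k _; have lt_kl := ltn_ord k.
  rewrite /bump /= add0n -natr1 (_ : l - k.+1 + e.+1 = l - k + e)%N; last lia.
  by congr (_ * _ * _); ring.
rewrite shifted -big_split /=; apply: eq_bigr => k _.
have le_kl : (k <= l)%N by rewrite -ltnS.
have := bin_weighted_pascal (l - k) e (c + k%:R).
rewrite -ac_e natrB // => pascal.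
transitivity (((a + c - (c + k%:R)) * 'C(l - k + e, e.+1)%:R
    + (c + k%:R) * 'C(l - k + e.+1, e.+1)%:R) * g`_k); first ring.
by rewrite pascal; ring.
Qed.

Lemma newNumerator_coef (n : nat) (b : 'I_n -> nat) (i : 'I_n) (h' : {poly rat}) (k : nat) :
  (0 < b i)%N -> h'`_0 = 1 ->
  (newNumerator b i h')`_k * (b i)%:R
  = (((segreDim b).-1 - b i)%N%:R + 1 - k%:R) * prevCoef h' k + ((b i)%:R + k%:R) * h'`_k.
Proof.
move=> bi_gt0 h'0; have bi_neq0 : (b i)%:R != 0 :> rat by rewrite pnatr_eq0 -lt0n.
set r := (size h').-1; set a : rat := ((segreDim b).-1 - b i)%N%:R.
have h'_big j : (r < j)%N -> h'`_j = 0.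
  by move=> lt_rj; apply: nth_default; rewrite (leq_trans (leqSpred _)).
rewrite coef_poly /newCoef -/r -/a.
case: k => [|k] /=; first by rewrite mul1r mulr0 add0r addr0 h'0 mulr1.
rewrite ltnS -natr1; case: (ltngtP k r) => [lt_kr | lt_rk | ->].
- by rewrite ltnS (ltnW lt_kr) natrD mulrDl !mulfVK //; ring.
- rewrite ltnS leqNgt lt_rk /= !h'_big ?mul0r ?mulr0 ?addr0 //; exact: ltnW.
- by rewrite ltnSn (h'_big r.+1) // mulr0 addr0 mulfVK //; ring.
Qed.

Lemma newNumerator_series (n : nat) (b : 'I_n -> nat) (i : 'I_n) (h' : {poly rat}) :
  (0 < b i)%N ->
  HPseries_is (segreHilb (decr_at b i)) h' (segreDim (decr_at b i)) ->
  HPseries_is (segreHilb b) (newNumerator b i h') (segreDim b).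
Proof.
move=> bi_gt0 Hser' l; have bi_neq0 : (b i)%:R != 0 :> rat by rewrite pnatr_eq0 -lt0n.
have dimE := segreDim_decr bi_gt0.
have le_bi_dim : (b i <= (segreDim b).-1)%N by rewrite /segreDim (bigD1 i) //= leq_addr.
apply: (mulIf bi_neq0); rewrite -natrM segreHilb_decr // natrM Hser' mulrC natrD.
rewrite [RHS]mulrC -[RHS]ratSeriesCoefZ {1}dimE /segreDim; symmetry.
apply: (ratSeriesCoef_shift (a := ((segreDim b).-1 - b i)%N%:R)) => [|k].
  by rewrite -natrD subnK // dimE.
by rewrite coefZ mulrC newNumerator_coef ?(HPseries_coef0 Hser').
Qed.

(* Positivity of the top coefficient in the case r = d - 1 - b_i: reciprocity
   for h' gives b_j <= b_i for all j, and then h_r = prod_j binom(b_i, b_j). *)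
Lemma segre_top_coef_pos (n : nat) (b : 'I_n -> nat) (i : 'I_n) (h' h : {poly rat}) (r : nat) :
  (0 < b i)%N ->
  HPseries_is (segreHilb (decr_at b i)) h' (segreDim (decr_at b i)) ->
  HPseries_is (segreHilb b) h (segreDim b) ->
  (size h' <= r.+1)%N -> h'`_r != 0 -> (size h <= r.+1)%N ->
  (r + b i = \sum_(j < n) b j)%N -> 0 < h`_r.
Proof.
move=> bi_gt0 Hser' Hser le_h'r h'r_neq0 le_hr rE.
have sum_decr : ((\sum_(j < n) decr_at b i j).+1 = \sum_(j < n) b j)%N.
  by have := segreDim_decr bi_gt0; rewrite /segreDim => -[].
have le_bj_bi j : (b j <= b i)%N.
  have le_r_sum : (r <= \sum_(j < n) decr_at b i j)%N by lia.
  move: h'r_neq0; rewrite (segre_numerator_top Hser' le_h'r le_r_sum) pnatr_eq0.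
  have -> : (\sum_(j < n) decr_at b i j - r = (b i).-1)%N by lia.
  rewrite (bigD1 j) //= muln_eq0 negb_or -lt0n bin_gt0 => /andP[+ _].
  by rewrite /decr_at; case: eqP => [-> //| _ ]; lia.
rewrite (segre_numerator_top Hser le_hr) -rE ?leq_addr // ltr0n addKn.
by apply: prodn_gt0 => j; rewrite bin_gt0.
Qed.

Theorem mainTheorem4 (n : nat) (b : 'I_n -> nat) (i : 'I_n) (h' : {poly rat}) :
  (1 <= b i)%N ->
  h' != 0 ->
  HPseries_is (segreHilb (decr_at b i)) h' (segreDim b).-1 ->
  let r := (size h').-1 in
  let h := newNumerator b i h' in
  [/\ HPseries_is (segreHilb b) h (segreDim b),
      h`_0 = 1,
      (forall k : nat, (1 <= k <= r)%N ->
         h`_k = ((((segreDim b).-1 - b i)%N%:R - (k.-1)%:R) * h'`_(k.-1)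
                 + ((b i + k)%N)%:R * h'`_k) / (b i)%:R),
      h`_r.+1 = ((((segreDim b).-1 - b i)%N)%:R - r%:R) * h'`_r / (b i)%:R
    & (h`_r.+1 = 0 ->
         h`_r = (prevCoef h' r + ((b i + r)%N)%:R * h'`_r) / (b i)%:R
         /\ 0 < h`_r)].
Proof.
move=> bi_gt0 h'_neq0 Hser' r h.
have bi_neq0 : (b i)%:R != 0 :> rat by rewrite pnatr_eq0 -lt0n.
rewrite (segreDim_decr bi_gt0) /= in Hser'.
have Hser : HPseries_is (segreHilb b) h (segreDim b) := newNumerator_series bi_gt0 Hser'.
have size_h' : size h' = r.+1 by rewrite prednK // size_poly_gt0.
have h'r_neq0 : h'`_r != 0 by rewrite -lead_coef_eq0 lead_coefE size_h' in h'_neq0.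
pose a : rat := ((segreDim b).-1 - b i)%N%:R.
have coef_h k : h`_k = ((a + 1 - k%:R) * prevCoef h' k + ((b i)%:R + k%:R) * h'`_k) / (b i)%:R.
  by rewrite -newNumerator_coef ?(HPseries_coef0 Hser') ?mulfK.
have h_top : h`_r.+1 = (a - r%:R) * h'`_r / (b i)%:R.
  by rewrite coef_h (nth_default _ (eq_leq size_h')) mulr0 addr0 -natr1 /=; congr (_ * _ / _); ring.
split => //.
- by rewrite coef_h mulr0 add0r addr0 (HPseries_coef0 Hser') mulr1 divff.
- case=> [//|k] /andP[_ le_kr]; rewrite coef_h natrD -natr1 /=.
  by congr ((_ * _ + _ * _) / _); ring.
move=> /eqP; rewrite h_top !mulf_eq0 invr_eq0 (negbTE bi_neq0) (negbTE h'r_neq0) !orbF.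
rewrite subr_eq0 => /eqP a_r.
split; first by rewrite coef_h a_r natrD; ring.
apply: (segre_top_coef_pos bi_gt0 Hser' Hser (eq_leq size_h') h'r_neq0).
  apply/leq_sizeP => j; rewrite leq_eqVlt => /predU1P[<-|lt_rj].
    by rewrite h_top a_r subrr !mul0r.
  by apply: nth_default; apply: leq_trans (size_poly _ _) lt_rj.
have le_bi_sum : (b i <= \sum_(j < n) b j)%N by rewrite (bigD1 i) //= leq_addr.
by move/eqP: a_r; rewrite eqr_nat => /eqP <-; rewrite subnK.
Qed.
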